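(* Let $(N_m)_{m\ge 0}$ be positive integers with $N_0=N$, and for each $m\ge1$ let $W_m:\mathbb{R}^{N_{m-1}}\to\mathbb{C}^{N_m}$ be linear with $W_m^*W_m=\mathrm{Id}$. Let $X$ be a random vector in $\mathbb{R}^N$ with $E(\|X\|^2)<\infty$ and let $(X_m)_{m\ge0}$ be its expected scattering layers. Then for every $M>0$, $$\lim_{m\to\infty}E\big(\|X_m\|\,\mathbf{1}_{\|X\|\le M}\big)=0.$$
   Context: For $z\in\mathbb{C}^n$, $|z|$ denotes the vector of coordinatewise complex moduli; $\|\cdot\|$ is the Euclidean norm. Expected scattering layers: $X_0=X$ and $X_{m+1}=|W_{m+1}(X_m-E(X_m))|\in\mathbb{R}^{N_{m+1}}$ for $m\ge0$. *)

From HB Require Import structures.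
From mathcomp Require Import all_boot all_order all_algebra.
From mathcomp Require Import all_classical all_reals all_analysis.
Set Implicit Arguments. Unset Strict Implicit. Unset Printing Implicit Defensive.
Import Order.TTheory GRing.Theory Num.Theory.
Local Open Scope ring_scope.

Definition vnorm {R : realType} {n : nat} (v : 'cV[R]_n) : R :=
  Num.sqrt (\sum_(i < n) v i 0 ^+ 2).

(* A linear map W : R^n -> C^m is represented by its real and imaginary
   parts: W v = A v + i B v, with A B : 'M_(m, n).  With respect to the
   real inner product Re<u,v> on C^m, W^* u = A^T Re u + B^T Im u, so
   W^* W = A^T A + B^T B. *)
Definition isometry_cplx {R : realType} {m n : nat} (A B : 'M[R]_(m, n)) : Prop :=
  A^T *m A + B^T *m B = 1%:M.

Definition cmod_vec {R : realType} {m n : nat} (A B : 'M[R]_(m, n))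
  (v : 'cV[R]_n) : 'cV[R]_m :=
  \col_j Num.sqrt ((A *m v) j 0 ^+ 2 + (B *m v) j 0 ^+ 2).

Definition Evec {d} {T : measurableType d} {R : realType} (P : probability T R)
  {n : nat} (f : T -> 'cV[R]_n) : 'cV[R]_n :=
  \col_i fine (expectation P (fun w => f w i 0)).

(* Expected scattering layers: layer 0 = X,
   layer (m+1) = |W_{m+1} (layer m - E(layer m))|, where W_{m+1} = (A m, B m). *)
Fixpoint layer {d} {T : measurableType d} {R : realType} (P : probability T R)
  (N : nat -> nat) (A B : forall m, 'M[R]_(N m.+1, N m))
  (X : T -> 'cV[R]_(N 0)) (m : nat) : T -> 'cV[R]_(N m) :=
  match m return T -> 'cV[R]_(N m) with
  | 0 => X
  | k.+1 => fun w =>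
      cmod_vec (A k) (B k) (layer P A B X k w - Evec P (layer P A B X k))
  end.

From HB Require Import structures.
From mathcomp Require Import all_boot all_order all_algebra.
From mathcomp Require Import all_classical all_reals all_analysis.
From mathcomp Require Import measurable_realfun ring lra.
Import Order.TTheory GRing.Theory Num.Theory.
Import numFieldNormedType.Exports.

Set Implicit Arguments.
Unset Strict Implicit.
Unset Printing Implicit Defensive.

Local Open Scope ring_scope.
Local Open Scope classical_set_scope.

(* Since W^*W = Id, |W z| has the Euclidean norm of z, hence
   E|X_(m+1)|^2 = E|X_m|^2 - |E X_m|^2: the energies decrease, so |E X_m| -> 0.
   Every layer is a 1-Lipschitz function of X, with nonnegative coordinates
   from m = 1 on.  Cover the ball |X| <= M by finitely many measurable cells
   on which X has diameter at most d.  For w, w' in one cell, Y = X_(m+1),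
   polarization gives <Y w', Y w> >= (|Y w|^2 - d^2)/2; as the coordinates
   are nonnegative, integrating in w' and then in w over the cell C yields
   P(C) E[(|Y|^2 - d^2)_+ 1_C] <= 2 |E Y|^2.  With |Y| <= d + (|Y|^2 - d^2)_+/d
   this bounds E[|X_(m+1)| 1_(|X| <= M)] by d + K_d |E X_(m+1)|^2. *)

Section column_vectors.
Variable R : realType.

Definition sqnorm n (v : 'cV[R]_n) : R := \sum_(i < n) v i 0 ^+ 2.
Definition dotv n (u v : 'cV[R]_n) : R := \sum_(i < n) u i 0 * v i 0.

Lemma sqnorm_ge0 n (v : 'cV[R]_n) : 0 <= sqnorm v.
Proof. by apply: sumr_ge0 => i _; exact: sqr_ge0. Qed.

Lemma vnorm_ge0 n (v : 'cV[R]_n) : 0 <= vnorm v.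
Proof. exact: sqrtr_ge0. Qed.

Lemma vnorm_sqr n (v : 'cV[R]_n) : vnorm v ^+ 2 = sqnorm v.
Proof. by rewrite sqr_sqrtr // sqnorm_ge0. Qed.

Lemma sqr_coord_le_sqnorm n (v : 'cV[R]_n) i : v i 0 ^+ 2 <= sqnorm v.
Proof.
by rewrite /sqnorm (bigD1 i) //= lerDl sumr_ge0 // => j _; exact: sqr_ge0.
Qed.

Lemma normr_coord_le_vnorm n (v : 'cV[R]_n) i : `|v i 0| <= vnorm v.
Proof. by rewrite -sqrtr_sqr ler_wsqrtr // sqr_coord_le_sqnorm. Qed.

Lemma vnorm_le1D_sqnorm n (v : 'cV[R]_n) : vnorm v <= 1 + sqnorm v.
Proof. rewrite -vnorm_sqr; have := vnorm_ge0 v; nra. Qed.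

Lemma dotvC n (u v : 'cV[R]_n) : dotv u v = dotv v u.
Proof. by apply: eq_bigr => i _; rewrite mulrC. Qed.

Lemma dotvv n (v : 'cV[R]_n) : dotv v v = sqnorm v.
Proof. by apply: eq_bigr => i _; rewrite expr2. Qed.

Lemma dotv_ge0 n (u v : 'cV[R]_n) :
  (forall i, 0 <= u i 0) -> (forall i, 0 <= v i 0) -> 0 <= dotv u v.
Proof. by move=> u_ge0 v_ge0; apply: sumr_ge0 => i _; rewrite mulr_ge0. Qed.

Lemma sqnormB n (u v : 'cV[R]_n) :
  sqnorm (u - v) = sqnorm u - 2 * dotv u v + sqnorm v.
Proof.
rewrite /sqnorm /dotv mulr_sumr -sumrB -big_split /=.
by apply: eq_bigr => i _; rewrite !mxE; ring.
Qed.

Lemma sqnormB_le_box n (u v : 'cV[R]_n) (lo : 'I_n -> R) (h : R) :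
  (forall i, lo i <= u i 0 <= lo i + h) ->
  (forall i, lo i <= v i 0 <= lo i + h) ->
  sqnorm (u - v) <= n%:R * h ^+ 2.
Proof.
move=> u_box v_box.
rewrite mulr_natl -[X in _ *+ X]card_ord -sumr_const ler_sum // => i _.
by rewrite !mxE; move: (u_box i) (v_box i) => /andP[? ?] /andP[? ?]; nra.
Qed.

Lemma sqnorm_mx n (v : 'cV[R]_n) : sqnorm v = (v^T *m v) 0 0.
Proof. by rewrite mxE; apply: eq_bigr => i _; rewrite !mxE expr2. Qed.

Lemma sqnorm_cmod_vec m n (A B : 'M[R]_(m, n)) v :
  isometry_cplx A B -> sqnorm (cmod_vec A B v) = sqnorm v.
Proof.
move=> isoAB; rewrite {1}/sqnorm.
under eq_bigr do rewrite mxE sqr_sqrtr ?addr_ge0 ?sqr_ge0 //.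
rewrite big_split /=; change (sqnorm (A *m v) + sqnorm (B *m v) = sqnorm v).
have addmxE (M1 M2 : 'M[R]_1) : (M1 + M2) 0 0 = M1 0 0 + M2 0 0 by rewrite mxE.
rewrite !sqnorm_mx.
have -> : v^T *m v = v^T *m ((A^T *m A + B^T *m B) *m v).
  by rewrite isoAB mul1mx.
by rewrite mulmxDl mulmxDr addmxE !trmx_mul !mulmxA.
Qed.

Lemma cmod_vec_ge0 m n (A B : 'M[R]_(m, n)) v j : 0 <= cmod_vec A B v j 0.
Proof. by rewrite mxE sqrtr_ge0. Qed.

Lemma sqr_dist_norm2_le (a b c e : R) :
  (Num.sqrt (a ^+ 2 + b ^+ 2) - Num.sqrt (c ^+ 2 + e ^+ 2)) ^+ 2
  <= (a - c) ^+ 2 + (b - e) ^+ 2.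
Proof.
have ab_ge0 : 0 <= a ^+ 2 + b ^+ 2 by rewrite addr_ge0 ?sqr_ge0.
have ce_ge0 : 0 <= c ^+ 2 + e ^+ 2 by rewrite addr_ge0 ?sqr_ge0.
have cauchy_schwarz :
    a * c + b * e <= Num.sqrt (a ^+ 2 + b ^+ 2) * Num.sqrt (c ^+ 2 + e ^+ 2).
  rewrite -sqrtrM // (le_trans (ler_norm _)) // -sqrtr_sqr ler_wsqrtr //.
  have := sqr_ge0 (a * e - b * c); nra.
by rewrite sqrrB !sqr_sqrtr //; nra.
Qed.

Lemma sqnorm_cmod_vecB_le m n (A B : 'M[R]_(m, n)) u v : isometry_cplx A B ->
  sqnorm (cmod_vec A B u - cmod_vec A B v) <= sqnorm (u - v).
Proof.
move=> isoAB; rewrite -(sqnorm_cmod_vec _ isoAB) ler_sum // => j _.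
have subE (w1 w2 : 'cV[R]_m) : (w1 - w2) j 0 = w1 j 0 - w2 j 0 by rewrite !mxE.
have cmodE w : cmod_vec A B w j 0 =
    Num.sqrt ((A *m w) j 0 ^+ 2 + (B *m w) j 0 ^+ 2) by rewrite mxE.
rewrite subE !cmodE sqr_sqrtr ?addr_ge0 ?sqr_ge0 // !mulmxBr !subE.
exact: sqr_dist_norm2_le.
Qed.

Lemma le_add_excess (y dl : R) : 0 <= y -> 0 < dl ->
  y <= dl + Num.max 0 (y ^+ 2 - dl ^+ 2) / dl.
Proof.
move=> y_ge0 dl_gt0; rewrite -(ler_pM2r dl_gt0) mulrDl divfK ?gt_eqF //.
set e := Num.max 0 _; have e_ge0 : 0 <= e by rewrite le_max lexx.
have e_ge : y ^+ 2 - dl ^+ 2 <= e by rewrite le_max lexx orbT.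
case: (lerP y dl) => [y_le|y_gt]; nra.
Qed.

Lemma grid_index (M h x : R) : 0 < h -> `|x| <= M ->
  exists k : 'I_(Num.truncn (2 * M / h)).+1,
    - M + k%:R * h <= x <= - M + k%:R * h + h.
Proof.
move=> h_gt0; rewrite ler_norml => /andP[x_ge x_le].
have t_ge0 : 0 <= (x + M) / h by apply: divr_ge0; lra.
have t_le : (x + M) / h <= 2 * M / h by rewrite ler_pM2r ?invr_gt0 //; lra.
have tE : (x + M) / h * h = x + M by rewrite divfK ?gt_eqF.
move: t_ge0 t_le tE; set t := (x + M) / h; set K := Num.truncn _.
move=> t_ge0 t_le tE.
have /andP[_ K_gt] := truncn_itv (le_trans t_ge0 t_le).
have [k_le t_lt] :
    (minn (Num.truncn t) K)%:R <= t /\ t <= (minn (Num.truncn t) K)%:R + 1.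
  have /andP[tr_le tr_gt] := truncn_itv t_ge0.
  case: leqP => [_ | /ltnW K_le]; first by rewrite natr1 tr_le ltW.
  rewrite natr1 (ltW (le_lt_trans t_le K_gt)); split=> //.
  by apply: le_trans tr_le; rewrite ler_nat.
exists (inord (minn (Num.truncn t) K)); rewrite inordK ?ltnS ?geq_minr //.
have := ler_wpM2r (ltW h_gt0) k_le; have := ler_wpM2r (ltW h_gt0) t_lt.
rewrite mulrDl mul1r tE; clearbody t K => ? ?; apply/andP; split; lra.
Qed.

End column_vectors.

Section probability_integrals.
Context d (T : measurableType d) (R : realType) (P : probability T R).
Local Notation Rintegrable f := (P.-integrable setT (EFin \o f)).
Implicit Types (f g : T -> R) (C : set T).

Lemma indic_ge0 C w : 0 <= \1_C w :> R.
Proof. by rewrite indicE ler0n. Qed.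

Lemma indic_in1 C w : C w -> \1_C w = 1 :> R.
Proof. by move=> Cw; rewrite indicE mem_set. Qed.

Lemma indic_out0 C w : ~ C w -> \1_C w = 0 :> R.
Proof. by move=> nCw; rewrite indicE memNset. Qed.

Lemma Rintegrable_cst (c : R) : Rintegrable (fun=> c).
Proof. exact: finite_measure_integrable_cst. Qed.

Lemma RintegrableD f g :
  Rintegrable f -> Rintegrable g -> Rintegrable (fun w => f w + g w).
Proof.
move=> f_int g_int.
exact: eq_integrable measurableT _ _ _ (integrableD measurableT f_int g_int).
Qed.

Lemma RintegrableB f g :
  Rintegrable f -> Rintegrable g -> Rintegrable (fun w => f w - g w).
Proof.
move=> f_int g_int.
exact: eq_integrable measurableT _ _ _ (integrableB measurableT f_int g_int).
Qed.

Lemma RintegrableZl (c : R) f : Rintegrable f -> Rintegrable (fun w => c * f w).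
Proof.
move=> f_int.
apply: eq_integrable measurableT _ _ _ (integrableZl measurableT c f_int).
by move=> w _ /=; rewrite EFinM.
Qed.

Lemma RintegrableZr (c : R) f : Rintegrable f -> Rintegrable (fun w => f w * c).
Proof.
by move=> f_int; under eq_fun do rewrite mulrC; exact: RintegrableZl.
Qed.

Lemma Rintegrable_sum (I : Type) (s : seq I) (F : I -> T -> R) :
  (forall i, Rintegrable (F i)) -> Rintegrable (fun w => \sum_(i <- s) F i w).
Proof.
move=> F_int; elim: s => [|i s IH].
  by under eq_fun do rewrite big_nil; exact: Rintegrable_cst.
by under eq_fun do rewrite big_cons; exact: RintegrableD.
Qed.

Lemma Rintegrable_le f g : measurable_fun setT f ->
  (forall w, `|f w| <= g w) -> Rintegrable g -> Rintegrable f.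
Proof.
move=> mf f_le g_int; apply: le_integrable g_int => //.
  exact/measurable_EFinP.
move=> w _ /=; rewrite lee_fin (le_trans (f_le w)) // ger0_norm //.
exact: le_trans (f_le w).
Qed.

Lemma Rintegral_cst_probability (c : R) : \int[P]_w c = c.
Proof.
rewrite Rintegral_cst // -[RHS]mulr1; congr (c * _).
by rewrite -[RHS]/(fine 1%E); congr fine; exact: probability_setT.
Qed.

Lemma Rintegral_sum (I : Type) (s : seq I) (F : I -> T -> R) :
  (forall i, Rintegrable (F i)) ->
  \int[P]_w (\sum_(i <- s) F i w) = \sum_(i <- s) \int[P]_w F i w.
Proof.
move=> F_int; elim: s => [|i s IH].
  under eq_Rintegral do rewrite big_nil.
  by rewrite Rintegral_cst_probability big_nil.
under eq_Rintegral do rewrite big_cons.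
by rewrite RintegralD ?big_cons ?IH //; exact: Rintegrable_sum.
Qed.

Lemma Rintegral_indic C : measurable C -> \int[P]_w \1_C w = fine (P C).
Proof. by move=> mC; rewrite /Rintegral integral_indic // setIT. Qed.

Lemma expectation_Rintegral f :
  Rintegrable f -> expectation P f = (\int[P]_w f w)%:E.
Proof.
by move=> f_int; rewrite expectation.unlock fineK // integrable_fin_num.
Qed.

Definition sqintegrable n (Z : T -> 'cV[R]_n) :=
  (forall i, measurable_fun setT (fun w => Z w i 0)) /\
  Rintegrable (fun w => sqnorm (Z w)).

Lemma measurable_sqnorm n (Z : T -> 'cV[R]_n) :
  (forall i, measurable_fun setT (fun w => Z w i 0)) ->
  measurable_fun setT (fun w => sqnorm (Z w)).
Proof. by move=> mZ; apply: measurable_sum => i; exact: measurable_funX. Qed.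

Lemma measurable_vnorm n (Z : T -> 'cV[R]_n) :
  (forall i, measurable_fun setT (fun w => Z w i 0)) ->
  measurable_fun setT (fun w => vnorm (Z w)).
Proof.
move=> mZ; apply: measurableT_comp (measurable_sqnorm mZ).
exact: continuous_measurable_fun (@sqrt_continuous R).
Qed.

Lemma measurable_vnorm_le n (Z : T -> 'cV[R]_n) (M : R) :
  (forall i, measurable_fun setT (fun w => Z w i 0)) ->
  measurable [set w | vnorm (Z w) <= M].
Proof.
move=> /measurable_vnorm /(_ measurableT _ (measurable_itv `]-oo, M]%R)).
by rewrite setTI; congr measurable; apply/seteqP; split=> w /=; rewrite in_itv.
Qed.

Lemma measurable_cmod_vec m n (A B : 'M[R]_(m, n)) (Z : T -> 'cV[R]_n) :
  (forall i, measurable_fun setT (fun w => Z w i 0)) ->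
  forall j, measurable_fun setT (fun w => cmod_vec A B (Z w) j 0).
Proof.
move=> mZ j; under eq_fun do rewrite mxE.
apply: measurableT_comp (continuous_measurable_fun (@sqrt_continuous R)) _.
by apply: measurable_funD; apply: measurable_funX; under eq_fun do rewrite mxE;
  apply: measurable_sum => i; apply: measurable_funM.
Qed.

Lemma sqintegrable_of_expectation n (Z : T -> 'cV[R]_n) :
  (forall i, measurable_fun setT (fun w => Z w i 0)) ->
  (expectation P (fun w => (vnorm (Z w) ^+ 2)%R) < +oo)%E -> sqintegrable Z.
Proof.
move=> mZ; rewrite expectation.unlock => fin_moment; split=> //.
apply/integrableP; split; first exact/measurable_EFinP/measurable_sqnorm.
by under eq_integral do rewrite /= ger0_norm ?sqnorm_ge0 // -vnorm_sqr.
Qed.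

Section square_integrable.
Variables (n : nat) (Z : T -> 'cV[R]_n).
Hypothesis Z_sqint : sqintegrable Z.

Lemma Rintegrable_coord i : Rintegrable (fun w => Z w i 0).
Proof.
have [mZ sqnorm_int] := Z_sqint.
apply: Rintegrable_le (mZ i) _ (RintegrableD (Rintegrable_cst 1) sqnorm_int).
move=> w.
exact: le_trans (normr_coord_le_vnorm _ _) (vnorm_le1D_sqnorm _).
Qed.

Lemma Rintegrable_dotv c : Rintegrable (fun w => dotv (Z w) c).
Proof.
by apply: Rintegrable_sum => i; exact/RintegrableZr/Rintegrable_coord.
Qed.

Lemma Evec_coord i : Evec P Z i 0 = \int[P]_w Z w i 0.
Proof. by rewrite mxE expectation.unlock. Qed.

Lemma Rintegral_dotv c : \int[P]_w dotv (Z w) c = dotv (Evec P Z) c.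
Proof.
rewrite Rintegral_sum => [|i]; last exact/RintegrableZr/Rintegrable_coord.
apply: eq_bigr => i _; rewrite Evec_coord RintegralZr //.
exact: Rintegrable_coord.
Qed.

Variables (m : nat) (A B : 'M[R]_(m, n)).
Hypothesis isoAB : isometry_cplx A B.

Lemma sqnorm_cmod_center w : sqnorm (cmod_vec A B (Z w - Evec P Z)) =
  sqnorm (Z w) - 2 * dotv (Z w) (Evec P Z) + sqnorm (Evec P Z).
Proof. by rewrite sqnorm_cmod_vec // sqnormB. Qed.

Lemma sqintegrable_cmod_center :
  sqintegrable (fun w => cmod_vec A B (Z w - Evec P Z)).
Proof.
have [mZ sqnorm_int] := Z_sqint; split.
  apply: measurable_cmod_vec => i; under eq_fun do rewrite !mxE.
  by apply: measurable_funD => //; exact: measurable_cst.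
under eq_fun do rewrite sqnorm_cmod_center.
apply: RintegrableD (Rintegrable_cst _).
exact/RintegrableB/RintegrableZl/Rintegrable_dotv.
Qed.

Lemma Rintegral_sqnorm_cmod_center :
  \int[P]_w sqnorm (cmod_vec A B (Z w - Evec P Z)) =
  \int[P]_w sqnorm (Z w) - sqnorm (Evec P Z).
Proof.
have [_ sqnorm_int] := Z_sqint.
under eq_Rintegral do rewrite sqnorm_cmod_center.
rewrite RintegralD ?RintegralB ?RintegralZl ?Rintegral_dotv ?dotvv
  ?Rintegral_cst_probability //; first ring.
- exact: Rintegrable_dotv.
- exact/RintegrableZl/Rintegrable_dotv.
- exact/RintegrableB/RintegrableZl/Rintegrable_dotv.
- exact: Rintegrable_cst.
Qed.

End square_integrable.
End probability_integrals.

Section grid_cover.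
Context d (T : measurableType d) (R : realType) (n : nat) (X : T -> 'cV[R]_n).
Hypothesis mX : forall i, measurable_fun setT (fun w => X w i 0).

Definition grid_cell (M h : R) {K : nat} (k : {ffun 'I_n -> 'I_K.+1}) : set T :=
  [set w | forall i, - M + (k i)%:R * h <= X w i 0 <= - M + (k i)%:R * h + h].

Lemma measurable_grid_cell M h {K} (k : {ffun 'I_n -> 'I_K.+1}) :
  measurable (grid_cell M h k).
Proof.
have -> : grid_cell M h k = \bigcap_(i in [set: 'I_n])
    [set w | - M + (k i)%:R * h <= X w i 0 <= - M + (k i)%:R * h + h].
  by apply/seteqP; split=> w /= w_in i => [_|]; [exact: w_in | exact: w_in i I].
apply: fin_bigcap_measurable => [|i _]; first exact: finite_finset.
have := mX i measurableT
  (measurable_itv `[- M + (k i)%:R * h, - M + (k i)%:R * h + h]%R).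
by rewrite setTI; congr measurable; apply/seteqP; split=> w /=; rewrite in_itv.
Qed.

Lemma small_cells_cover (M dl : R) : 0 < dl ->
  exists (I : finType) (C : I -> set T),
  [/\ forall k, measurable (C k),
      forall k w w', C k w -> C k w' -> sqnorm (X w - X w') <= dl ^+ 2 &
      forall w, vnorm (X w) <= M -> exists k, C k w].
Proof.
move=> dl_gt0; set h := dl / n.+1%:R.
have h_gt0 : 0 < h by rewrite divr_gt0.
have dlE : dl = n.+1%:R * h by rewrite /h mulrC divfK // pnatr_eq0.
clearbody h.
exists {ffun 'I_n -> 'I_(Num.truncn (2 * M / h)).+1}, (grid_cell M h); split.
- exact: measurable_grid_cell.
- move=> k w w' Cw Cw'.
  apply: le_trans (sqnormB_le_box (lo := fun i => - M + (k i)%:R * h) Cw Cw') _.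
  rewrite dlE exprMn ler_wpM2r ?sqr_ge0 // -natrX ler_nat.
  by rewrite expnS expn1 (leq_trans (leqnSn n)) // leq_pmulr.
- move=> w Xw_le.
  have /fin_all_exists [k k_cell] := fun i =>
    grid_index h_gt0 (le_trans (normr_coord_le_vnorm (X w) i) Xw_le).
  by exists [ffun i => k i] => i; rewrite ffunE; exact: k_cell.
Qed.

End grid_cover.

Section scattering_layers.
Context d (T : measurableType d) (R : realType) (P : probability T R)
  (N : nat -> nat) (A B : forall m, 'M[R]_(N m.+1, N m))
  (X : T -> 'cV[R]_(N 0)).
Hypothesis isoAB : forall m, isometry_cplx (A m) (B m).
Hypothesis X_sqint : sqintegrable P X.
Local Notation Rintegrable f := (P.-integrable setT (EFin \o f)).
Local Notation L := (layer P A B X).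
Local Notation mu m := (Evec P (L m)).

Lemma sqintegrable_layer m : sqintegrable P (L m).
Proof. by elim: m => [|m IH] //=; exact: sqintegrable_cmod_center. Qed.

Lemma Rintegral_sqnorm_layerS m :
  \int[P]_w sqnorm (L m.+1 w) = \int[P]_w sqnorm (L m w) - sqnorm (mu m).
Proof.
exact (Rintegral_sqnorm_cmod_center (sqintegrable_layer m) (isoAB m)).
Qed.

Lemma sqnorm_Evec_layer_cvg0 : (fun m => sqnorm (mu m)) @ \oo --> 0.
Proof.
pose e m := \int[P]_w sqnorm (L m w).
have eS m : e m.+1 = e m - sqnorm (mu m) := Rintegral_sqnorm_layerS m.
have e_cvg : cvgn e.
  apply: nonincreasing_is_cvgn.
    by apply/nonincreasing_seqP => m; rewrite eS gerBl sqnorm_ge0.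
  by exists 0 => _ [m _ <-]; apply: Rintegral_ge0 => w _; exact: sqnorm_ge0.
have -> : (fun m => sqnorm (mu m)) = (fun m => e m - e m.+1).
  by apply/funext => m; rewrite eS; ring.
rewrite -(subrr (limn e)); apply: cvgB => //.
by rewrite cvg_shiftS.
Qed.

Lemma layerS_ge0 m w j : 0 <= L m.+1 w j 0.
Proof. exact: cmod_vec_ge0. Qed.

Lemma Evec_layerS_ge0 m j : 0 <= mu m.+1 j 0.
Proof.
by rewrite Evec_coord; apply: Rintegral_ge0 => w _; exact: layerS_ge0.
Qed.

Lemma sqnorm_layerB_le m w w' : sqnorm (L m w - L m w') <= sqnorm (X w - X w').
Proof.
elim: m => [//|m IH]; apply: le_trans (sqnorm_cmod_vecB_le _ _ (isoAB m)) _.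
by rewrite opprB addrA subrK.
Qed.

Definition excess (dl : R) m w := Num.max 0 (sqnorm (L m.+1 w) - dl ^+ 2).

Lemma excess_ge0 dl m w : 0 <= excess dl m w.
Proof. by rewrite le_max lexx. Qed.

Lemma excess_le_sqnorm dl m w : excess dl m w <= sqnorm (L m.+1 w).
Proof. by rewrite ge_max sqnorm_ge0 gerBl sqr_ge0. Qed.

Lemma Rintegrable_excess_indic dl m C : measurable C ->
  Rintegrable (fun w => excess dl m w * \1_C w).
Proof.
move=> mC; have [mL sqnorm_int] := sqintegrable_layer m.+1.
apply: (Rintegrable_le _ _ sqnorm_int) => [|w].
  apply: measurable_funM; last exact: measurable_indic.
  apply: measurable_maxr; first exact: measurable_cst.
  by apply: measurable_funB; [exact: measurable_sqnorm | exact: measurable_cst].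
rewrite normrM !ger0_norm ?excess_ge0 ?indic_ge0 //.
have [Cw|nCw] := pselect (C w).
  by rewrite indic_in1 // mulr1 excess_le_sqnorm.
by rewrite indic_out0 // mulr0 sqnorm_ge0.
Qed.

Lemma excess_le_dotv dl m w w' : sqnorm (X w' - X w) <= dl ^+ 2 ->
  excess dl m w / 2 <= dotv (L m.+1 w') (L m.+1 w).
Proof.
move=> close; rewrite ler_pdivrMr // ge_max.
have D_ge0 : 0 <= dotv (L m.+1 w') (L m.+1 w).
  by apply: dotv_ge0 => i; exact: layerS_ge0.
have := le_trans (sqnorm_layerB_le m.+1 w' w) close; rewrite sqnormB.
have := sqnorm_ge0 (L m.+1 w'); move=> ? ?; apply/andP; split; lra.
Qed.

Section small_cell.
Variables (C : set T) (dl : R).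
Hypothesis mC : measurable C.
Hypothesis smallC : forall w w', C w -> C w' -> sqnorm (X w - X w') <= dl ^+ 2.

Lemma excess_cell_le_dotv m w :
  fine (P C) / 2 * (excess dl m w * \1_C w) <= dotv (L m.+1 w) (mu m.+1).
Proof.
have [Cw|nCw] := pselect (C w); last first.
  rewrite indic_out0 // !mulr0.
  by apply: dotv_ge0 => i; [exact: layerS_ge0 | exact: Evec_layerS_ge0].
rewrite indic_in1 // mulr1 mulrAC -mulrA dotvC -Rintegral_dotv; last first.
  exact: sqintegrable_layer.
rewrite -Rintegral_indic // -RintegralZr //; last exact: integrable_indic.
apply: (le_Rintegral measurableT) => [||w' _].
- exact/RintegrableZr/integrable_indic.
- exact/Rintegrable_dotv/sqintegrable_layer.
have [Cw'|nCw'] := pselect (C w').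
  by rewrite indic_in1 // mul1r excess_le_dotv // smallC.
by rewrite indic_out0 // mul0r; apply: dotv_ge0 => i; exact: layerS_ge0.
Qed.

(* For a negligible cell, [fine (P C) = 0] and [2 / 0 = 0]: both sides
   vanish. *)
Lemma Rintegral_excess_cell_le m :
  \int[P]_w (excess dl m w * \1_C w) <= 2 / fine (P C) * sqnorm (mu m.+1).
Proof.
have := fine_ge0 (measure_ge0 P C); rewrite le_eqVlt => /predU1P[PC0|PC_gt0].
  have PC_null : P C = 0%E by rewrite -[P C]fineK ?fin_num_measure // -PC0.
  rewrite -PC0 invr0 mulr0 mul0r.
  have -> : \int[P]_w (excess dl m w * \1_C w) = \int[P]_(w in C) excess dl m w.
    by rewrite [RHS]Rintegral_mkcond patch_indic.
  rewrite /Rintegral null_set_integral //.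
  apply: measurable_funS (measurableT) _ _ => //.
  apply/measurable_EFinP/measurable_maxr; first exact: measurable_cst.
  apply: measurable_funB; last exact: measurable_cst.
  by apply: measurable_sqnorm; case: (sqintegrable_layer m.+1).
have := le_Rintegral measurableT
  (RintegrableZl (fine (P C) / 2) (Rintegrable_excess_indic dl m mC))
  (Rintegrable_dotv (sqintegrable_layer m.+1) (mu m.+1))
  (fun w _ => excess_cell_le_dotv m w).
rewrite RintegralZl //; last exact: Rintegrable_excess_indic.
rewrite Rintegral_dotv ?dotvv; last exact: sqintegrable_layer.
by move=> ?; rewrite mulrAC ler_pdivlMr //; nra.
Qed.

End small_cell.

Lemma vnorm_layer_indic_le (S : set T) (I : finType) (C : I -> set T) dl m w :
  0 < dl -> (forall w, S w -> exists k, C k w) ->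
  vnorm (L m.+1 w) * \1_S w <= dl + dl^-1 * \sum_k excess dl m w * \1_(C k) w.
Proof.
move=> dl_gt0 coverS.
have term_ge0 k : 0 <= excess dl m w * \1_(C k) w.
  by rewrite mulr_ge0 ?excess_ge0 ?indic_ge0.
have [Sw|nSw] := pselect (S w); last first.
  rewrite indic_out0 // mulr0; apply: addr_ge0; first exact: ltW.
  by apply: mulr_ge0; [rewrite invr_ge0 ltW | exact: sumr_ge0].
have [k Ck] := coverS w Sw.
rewrite indic_in1 // mulr1 (le_trans (le_add_excess (vnorm_ge0 _) dl_gt0)) //.
rewrite vnorm_sqr lerD2l [_ / dl]mulrC.
apply: ler_wpM2l; first by rewrite invr_ge0 ltW.
by rewrite (bigD1 k) //= indic_in1 // mulr1 lerDl sumr_ge0.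
Qed.

Lemma Rintegrable_vnorm_layer_indic m S : measurable S ->
  Rintegrable (fun w => vnorm (L m w) * \1_S w).
Proof.
move=> mS; have [mL sqnorm_int] := sqintegrable_layer m.
apply: (Rintegrable_le (g := fun w => 1 + sqnorm (L m w))) => [|w|].
- apply: measurable_funM; last exact: measurable_indic.
  exact: measurable_vnorm.
- rewrite normrM !ger0_norm ?vnorm_ge0 ?indic_ge0 //.
  have [Sw|nSw] := pselect (S w).
    by rewrite indic_in1 // mulr1 vnorm_le1D_sqnorm.
  by rewrite indic_out0 // mulr0 addr_ge0 ?sqnorm_ge0.
- by apply: RintegrableD => //; exact: Rintegrable_cst.
Qed.

Lemma Rintegral_vnorm_layer_le (S : set T) (I : finType) (C : I -> set T) dl m :
  measurable S -> 0 < dl -> (forall k, measurable (C k)) ->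
  (forall k w w', C k w -> C k w' -> sqnorm (X w - X w') <= dl ^+ 2) ->
  (forall w, S w -> exists k, C k w) ->
  \int[P]_w (vnorm (L m.+1 w) * \1_S w) <=
    dl + dl^-1 * (\sum_k 2 / fine (P (C k))) * sqnorm (mu m.+1).
Proof.
move=> mS dl_gt0 mC smallC coverS.
have cell_int k : Rintegrable (fun w => excess dl m w * \1_(C k) w).
  exact: Rintegrable_excess_indic.
have sum_int := Rintegrable_sum (index_enum I) cell_int.
apply: (@le_trans _ _
    (\int[P]_w (dl + dl^-1 * \sum_k excess dl m w * \1_(C k) w))).
  apply: le_Rintegral => // [||w _].
  - exact: Rintegrable_vnorm_layer_indic.
  - by apply: RintegrableD; [exact: Rintegrable_cst | exact: RintegrableZl].
  - exact: vnorm_layer_indic_le.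
rewrite RintegralD ?Rintegral_cst_probability ?RintegralZl ?Rintegral_sum //;
  [|exact: Rintegrable_cst | exact: RintegrableZl].
rewrite lerD2l -mulrA; apply: ler_wpM2l; first by rewrite invr_ge0 ltW.
rewrite mulr_suml; apply: ler_sum => k _.
exact: (Rintegral_excess_cell_le (mC k) (smallC k)).
Qed.

Lemma Rintegral_vnorm_layer_ball_cvg0 (M : R) :
  (fun m => \int[P]_w (vnorm (L m w) * \1_[set w | vnorm (X w) <= M] w))
    @ \oo --> 0.
Proof.
have [mX _] := X_sqint.
set S := [set w | vnorm (X w) <= M].
have mS : measurable S := measurable_vnorm_le M mX.
rewrite -cvg_shiftS; apply/cvgrPdist_le => eps eps_gt0 /=.
set dl := eps / 2; have dl_gt0 : 0 < dl by rewrite divr_gt0.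
have [I [C [mC smallC coverS]]] := small_cells_cover mX M dl_gt0.
have [c [c_ge0 bound]] : exists c, 0 <= c /\ forall m,
    \int[P]_w (vnorm (L m.+1 w) * \1_S w) <= dl + c * sqnorm (mu m.+1).
  exists (dl^-1 * \sum_k 2 / fine (P (C k))); split => [|m].
    apply: mulr_ge0; first by rewrite invr_ge0 ltW.
    by apply: sumr_ge0 => k _; rewrite divr_ge0 // fine_ge0 // measure_ge0.
  exact: Rintegral_vnorm_layer_le.
have c1_gt0 : 0 < c + 1 by rewrite ltr_wpDl.
have := sqnorm_Evec_layer_cvg0; rewrite -cvg_shiftS.
move=> /cvgrPdist_le /(_ _ (divr_gt0 dl_gt0 c1_gt0)); apply: filterS => m.
rewrite !sub0r !normrN !ger0_norm ?sqnorm_ge0 //; last first.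
  by apply: Rintegral_ge0 => w _; rewrite mulr_ge0 ?vnorm_ge0 ?indic_ge0.
move=> mu_small; apply: le_trans (bound m) _.
have : c * sqnorm (mu m.+1) <= c * (dl / (c + 1)) by rewrite ler_wpM2l.
have : c * (dl / (c + 1)) <= dl by rewrite mulrA ler_pdivrMr //; nra.
rewrite /dl; lra.
Qed.

End scattering_layers.

Theorem mainTheorem2 (d : measure_display) (T : measurableType d) (R : realType)
  (P : probability T R) (N : nat -> nat)
  (A B : forall m, 'M[R]_(N m.+1, N m))
  (X : T -> 'cV[R]_(N 0)) :
  (forall m, (0 < N m)%N) ->
  (forall m, isometry_cplx (A m) (B m)) ->
  (forall i, measurable_fun setT (fun w => X w i 0)) ->
  (expectation P (fun w => (vnorm (X w) ^+ 2)%R) < +oo)%E ->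
  forall M : R, 0 < M ->
  (fun m : nat =>
      expectation P (fun w => vnorm (layer P A B X m w) *
                              \1_[set w | vnorm (X w) <= M] w))
     @ \oo --> 0%E.
Proof.
move=> _ isoAB mX moment_fin M _.
have X_sqint := sqintegrable_of_expectation mX moment_fin.
have layer_int m := Rintegrable_vnorm_layer_indic isoAB X_sqint m
  (measurable_vnorm_le M mX).
apply/fine_cvgP; split.
  by apply: nearW => m; rewrite expectation_Rintegral.
rewrite (_ : fine \o _ = fun m => \int[P]_w (vnorm (layer P A B X m w) *
    \1_[set w | vnorm (X w) <= M] w)).
  exact: Rintegral_vnorm_layer_ball_cvg0.
by apply/funext => m /=; rewrite expectation_Rintegral.
Qed.
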